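(* Let $n$, $k$, $t$ be positive integers with $k\geq t+1$ and $n\geq 2k$, and let $V$ be an $n$-dimensional vector space over $\mathbb{F}_q$. If $\mathcal{F}\subseteq{V\brack k}$ is an almost $t$-intersecting family with $\tau_t(\mathcal{F})\geq k+1$, then $|\mathcal{F}|\leq\binom{2k-2t+2}{k-t+1}$.
   Context: $q$ is a prime power; ${W\brack k}$ is the set of $k$-dimensional subspaces of $W$. A family $\mathcal{F}\subseteq{V\brack k}$ is almost $t$-intersecting if for each $F\in\mathcal{F}$ there is at most one $F'\in\mathcal{F}$ with $\dim(F\cap F')<t$. A subspace $W$ of $V$ is a $t$-cover of $\mathcal{F}$ if $\dim(W\cap F)\geq t$ for all $F\in\mathcal{F}$; the $t$-covering number $\tau_t(\mathcal{F})$ is the minimum dimension of a $t$-cover of $\mathcal{F}$. *)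

From HB Require Import structures.
From mathcomp Require Import all_boot all_order all_algebra all_field.
Set Implicit Arguments. Unset Strict Implicit. Unset Printing Implicit Defensive.
Import GRing.Theory.
Local Open Scope ring_scope.

Section Defs.
Variables (F : fieldType) (vT : vectType F).

(* A family of subspaces, given as a duplicate-free list (its size is |F|). *)
Definition almost_t_intersecting (t : nat) (fam : seq {vspace vT}) : Prop :=
  forall A, A \in fam -> (count (fun B => (\dim (A :&: B)%VS < t)%N) fam <= 1)%N.

Definition is_t_cover (t : nat) (fam : seq {vspace vT}) (W : {vspace vT}) : Prop :=
  forall A, A \in fam -> (t <= \dim (W :&: A)%VS)%N.

(* tau_t(fam) >= m, i.e. every t-cover has dimension at least m. *)
Definition tau_ge (t : nat) (fam : seq {vspace vT}) (m : nat) : Prop :=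
  forall W : {vspace vT}, is_t_cover t fam W -> (m <= \dim W)%N.
End Defs.

From HB Require Import structures.
From mathcomp Require Import all_boot all_order all_algebra all_field.
From mathcomp Require Import perm zify.
Set Implicit Arguments. Unset Strict Implicit. Unset Printing Implicit Defensive.
Import GRing.Theory.
Local Open Scope ring_scope.

(* Each member A of the family has exactly one partner A' with dim (A :&: A') < t:
   at least one, as otherwise A would be a t-cover of dimension k, and at most one
   by almost t-intersection.  After extending scalars to an infinite field, cutting
   every member with a generic subspace of codimension t - 1 yields spaces Z_i of
   dimension k - t + 1 with Z_i :&: Z_i' = 0 and Z_i :&: Z_j' <> 0 for i <> j.
   Lovasz's argument bounds such skew systems: after a generic projection onto a
   space of dimension a + b, the matrix (det [X_i; Y_j])_ij is diagonal with nonzero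
   diagonal, while Laplace expansion along its first a rows shows that its rank is
   at most 'C(a + b, a). *)

Section LaplaceExpansion.
Variables (L : fieldType) (s r : nat).

Lemma det_col_mx_expand (X : 'M[L]_(s, s + r)) (Y : 'M[L]_(r, s + r)) :
  \det (col_mx X Y) = \sum_(c : s.-tuple 'I_(s + r))
    (\prod_i X i (tnth c i)) * \det (col_mx (rowsub (tnth c) 1%:M) Y).
Proof.
pose top (p : 'S_(s + r)) := [tuple p (lshift r i) | i < s].
have prod_sel (c : s.-tuple _) (p : 'S_(s + r)) :
    \prod_i col_mx (rowsub (tnth c) 1%:M) Y (lshift r i) (p (lshift r i))
      = (c == top p)%:R.
  have [->|neq_c] := eqVneq c (top p).
    by apply: big1 => i _; rewrite col_mxEu !mxE tnth_mktuple eqxx.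
  have /existsP[i neq_i] : [exists i, tnth c i != p (lshift r i)].
    apply: contraR neq_c => /existsPn eq_c; apply/eqP/eq_from_tnth => i.
    by rewrite tnth_mktuple; apply/eqP/negPn/eq_c.
  by rewrite (bigD1 i) //= col_mxEu !mxE (negbTE neq_i) mul0r.
rewrite /determinant; under [RHS]eq_bigr => c _ do rewrite big_distrr.
rewrite exchange_big; apply: eq_bigr => p _ /=.
rewrite (bigD1 (top p)) //= [X in _ + X]big1 ?addr0 => [|c neq_c]; last first.
  by rewrite big_split_ord /= prod_sel (negbTE neq_c) !mul0r !mulr0.
rewrite !big_split_ord /= prod_sel eqxx mul1r mulrCA; congr (_ * (_ * _)).
- by apply: eq_bigr => i _; rewrite col_mxEu tnth_mktuple.
- by apply: eq_bigr => i _; rewrite !col_mxEd.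
Qed.

Lemma det_col_mx_row_perm (p : 'S_s) (X : 'M[L]_(s, s + r)) (Y : 'M[L]_(r, s + r)) :
  \det (col_mx (row_perm p X) Y) = (-1) ^+ p * \det (col_mx X Y).
Proof.
have -> : col_mx (row_perm p X) Y = block_mx (perm_mx p) 0 0 1%:M *m col_mx X Y.
  by rewrite mul_block_col !mul0mx mul1mx addr0 add0r row_permE.
by rewrite det_mulmx det_ublock det1 mulr1 det_perm.
Qed.

Lemma rowsub_perm_eq m n (c c' : m.-tuple 'I_n) (A : 'M[L]_n) :
  perm_eq c c' ->
  exists p : 'S_m, rowsub (tnth c) A = row_perm p (rowsub (tnth c') A).
Proof.
case/tuple_permP => p /val_inj eq_c; exists p.
by apply/matrixP => i j; rewrite !mxE eq_c tnth_mktuple.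
Qed.

Lemma det_col_mx_rowsub_nonuniq (c : s.-tuple 'I_(s + r)) (Y : 'M[L]_(r, s + r)) :
  ~~ uniq c -> \det (col_mx (rowsub (tnth c) 1%:M) Y) = 0.
Proof.
move=> c_nonuniq; have /injectivePn[a [b neq_ab eq_ab]] : ~~ injectiveb (tnth c).
  by apply: contra c_nonuniq => /injectiveP/tuple_uniqP.
apply: (determinant_alternate (i1 := lshift r a) (i2 := lshift r b)).
  by rewrite (inj_eq (@lshift_inj _ _)).
by move=> j; rewrite !col_mxEu !mxE eq_ab.
Qed.

Lemma mxrank_det_col_mx_le m1 m2
    (X : 'I_m1 -> 'M[L]_(s, s + r)) (Y : 'I_m2 -> 'M[L]_(r, s + r)) :
  (\rank (\matrix_(i, j) \det (col_mx (X i) (Y j))) <= 'C(s + r, s))%N.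
Proof.
pose b (c : s.-tuple 'I_(s + r)) : 'rV[L]_m2 :=
  \row_j \det (col_mx (rowsub (tnth c) 1%:M) (Y j)).
pose rep (S : {set 'I_(s + r)}) := [pick c : s.-tuple _ | uniq c && ([set x in c] == S)].
pose bS S := if rep S is Some c then b c else 0.
(* b c only depends, up to sign, on the set of entries of c, and vanishes unless
   c is duplicate-free: so one vector per s-subset of columns spans all b c. *)
pose V := (\sum_(S : {set 'I_(s + r)} | #|S| == s) <<bS S>>)%MS.
have b_sub c : (b c <= V)%MS.
  have [c_uniq|c_nonuniq] := boolP (uniq c); last first.
    suff -> : b c = 0 by apply: sub0mx.
    by apply/rowP => j; rewrite !mxE det_col_mx_rowsub_nonuniq.
  set S := [set x in c]; have cardS : #|S| == s.
    by rewrite cardsE (card_uniqP c_uniq) size_tuple.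
  case rep_S : (rep S) => [c'|]; last first.
    by move: rep_S; rewrite /rep; case: pickP => // /(_ c); rewrite c_uniq eqxx.
  have /andP[c'_uniq /eqP eqS] : uniq c' && ([set x in c'] == S).
    by move: rep_S; rewrite /rep; case: pickP => // c'' ? [<-].
  have /(rowsub_perm_eq 1%:M)[p eq_c] : perm_eq c c'.
    by apply: uniq_perm => // x; have /setP/(_ x) := eqS; rewrite !inE => ->.
  have -> : b c = (-1) ^+ p *: b c'.
    by apply/rowP => j; rewrite !mxE eq_c det_col_mx_row_perm.
  apply/scalemx_sub/(sumsmx_sup S cardS); rewrite genmxE /bS rep_S.
  exact: submx_refl.
have M_sub : (\matrix_(i, j) \det (col_mx (X i) (Y j)) <= V)%MS.
  apply/row_subP => i.
  have -> : row i (\matrix_(i, j) \det (col_mx (X i) (Y j)))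
          = \sum_c (\prod_k X i k (tnth c k)) *: b c.
    apply/rowP => j; rewrite !mxE det_col_mx_expand summxE.
    by apply: eq_bigr => c _; rewrite !mxE.
  by apply: summx_sub => c _; apply/scalemx_sub/b_sub.
apply: leq_trans (mxrankS M_sub) _; apply: leq_trans (mxrank_sum_leqif _).1 _ => /=.
rewrite -[X in 'C(X, _)](card_ord (s + r)) -card_draws -sum1_card big_set /=.
by apply: leq_sum => S _; rewrite genmxE rank_leq_row.
Qed.
End LaplaceExpansion.

Lemma mxrank_addsmx_notsub (L : fieldType) m n (A : 'M[L]_(m, n)) (v : 'rV[L]_n) :
  ~~ (v <= A)%MS -> \rank (A + v)%MS = (\rank A).+1.
Proof.
move=> v_notin; apply/eqP; rewrite eqn_leq; apply/andP; split.
  apply: leq_trans (mxrank_adds_leqif A v).1 _.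
  by rewrite -[X in (_ <= X)%N]addn1 leq_add2l rank_leq_row.
have [le_A_Av eq_A_Av] := mxrank_leqif_sup (addsmxSl A v).
rewrite ltn_neqAle le_A_Av eq_A_Av andbT.
by apply: contra v_notin => /(submx_trans (addsmxSr A v)).
Qed.

Section GenericSubspaces.
Variables (L : fieldType) (n : nat).
Hypothesis L_infinite : forall xs : seq L, exists x, x \notin xs.

Definition line_hit (v w : 'rV[L]_n) (U : 'M[L]_n) : L :=
  let a := v *m cokermx U in let b := w *m cokermx U in
  if [pick j | b 0 j != 0] is Some j then - a 0 j / b 0 j else 0.

Lemma line_hitP (v w : 'rV[L]_n) (U : 'M[L]_n) x :
  ~~ (v <= U)%MS -> ((v + x *: w)%R <= U)%MS -> x = line_hit v w U.
Proof.
rewrite /line_hit !submxE mulmxDl -scalemxAl.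
set a := v *m cokermx U; set b := w *m cokermx U => a_neq0 /eqP ab_eq0.
case: pickP => [j b_j_neq0 | b_eq0].
  have /eqP : a 0 j + x * b 0 j = 0 by have /rowP/(_ j) := ab_eq0; rewrite !mxE.
  by rewrite addr_eq0 => /eqP ->; rewrite opprK mulfK.
have {}b_eq0 : b = 0 by apply/rowP => j; rewrite [RHS]mxE; apply/eqP/negbFE/b_eq0.
by move: ab_eq0 a_neq0; rewrite b_eq0 scaler0 addr0 => ->; rewrite eqxx.
Qed.

Lemma exists_row_notsub (Us : seq 'M[L]_n) :
  (forall U, U \in Us -> \rank U < n)%N ->
  exists v : 'rV[L]_n, forall U, U \in Us -> ~~ (v <= U)%MS.
Proof.
elim: Us => [|U Us IHUs] proper_Us; first by exists 0.
have [v v_notin] : exists v : 'rV[L]_n, forall U, U \in Us -> ~~ (v <= U)%MS.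
  by apply: IHUs => U' U'_in; apply: proper_Us; rewrite inE U'_in orbT.
have [v_notin_U | v_in_U] := boolP (v <= U)%MS; last first.
  by exists v => U'; rewrite inE => /predU1P[-> //|]; apply: v_notin.
have [w w_notin_U] : exists w : 'rV[L]_n, ~~ (w <= U)%MS.
  have : ~~ (1%:M <= U)%MS by rewrite sub1mx /row_full neq_ltn proper_Us ?mem_head.
  by case/row_subPn => i; exists (row i 1%:M).
have [x] := L_infinite (0 :: map (line_hit v w) Us).
rewrite inE negb_or => /andP[x_neq0 /mapP x_hit].
exists (v + x *: w) => U'; rewrite inE => /predU1P[-> | U'_in].
  apply: contra w_notin_U => vxw_in_U.
  have : (x *: w <= U)%MS by rewrite -(addKr v (x *: w)) addmx_sub // eqmx_opp.
  by move/(scalemx_sub x^-1); rewrite scalerA mulVf ?scale1r.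
by apply/negP => /(line_hitP (v_notin U' U'_in)) x_eq; apply: x_hit; exists U'.
Qed.

Lemma exists_generic_addsmx p (Us : seq 'M[L]_n) : (p <= n)%N ->
  exists H : 'M[L]_n, \rank H = p /\
    forall U, U \in Us -> \rank (U + H)%MS = minn n (\rank U + p).
Proof.
elim: p => [_ | p IHp lt_p_n].
  exists 0; rewrite mxrank0; split=> // U _.
  by rewrite addsmx0_id addn0; apply/esym/minn_idPr/rank_leq_col.
have [H [rank_H rank_UH]] := IHp (ltnW lt_p_n).
pose Ws := H :: [seq (U + H)%MS | U <- Us & (\rank (U + H)%MS < n)%N].
have [v v_notin] : exists v : 'rV[L]_n, forall W, W \in Ws -> ~~ (v <= W)%MS.
  apply: exists_row_notsub => W; rewrite inE => /predU1P[-> | ].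
    by rewrite rank_H.
  by case/mapP => U; rewrite mem_filter => /andP[lt_UH _] ->.
exists (H + v)%MS; split.
  by rewrite mxrank_addsmx_notsub ?rank_H // v_notin ?mem_head.
move=> U U_in; rewrite addsmxA.
have [lt_UH_n | le_n_UH] := ltnP (\rank (U + H)%MS) n.
  rewrite mxrank_addsmx_notsub; last first.
    by rewrite v_notin // inE map_f ?orbT // mem_filter lt_UH_n.
  by move: lt_UH_n; rewrite rank_UH //; lia.
have -> : \rank (U + H + v)%MS = n.
  apply/eqP; rewrite eqn_leq rank_leq_col.
  exact: leq_trans le_n_UH (mxrankS (addsmxSl _ _)).
by move: le_n_UH; rewrite rank_UH //; lia.
Qed.

Lemma exists_generic_capmx c (Us : seq 'M[L]_n) :
  exists H : 'M[L]_n, \rank H = (n - c)%N /\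
    forall U, U \in Us -> \rank (U :&: H)%MS = (\rank U - c)%N.
Proof.
have [H [rank_H rank_UH]] := exists_generic_addsmx Us (leq_subr c n).
exists H; split=> // U U_in; have := mxrank_sum_cap U H.
by rewrite rank_UH // rank_H; have := rank_leq_col U; lia.
Qed.
End GenericSubspaces.

Lemma exists_eqmx_rank (L : fieldType) m n r (A : 'M[L]_(m, n)) :
  \rank A = r -> exists B : 'M[L]_(r, n), (B == A)%MS.
Proof. by move=> <-; exists (row_base A); apply/eqmxP/eq_row_base. Qed.

Lemma exists_mx_kermx (L : fieldType) n r (D : 'M[L]_n) :
  (\rank D + r = n)%N -> exists G : 'M[L]_(n, r), (kermx G == D)%MS.
Proof.
move=> rank_Dr; have [B eq_B] : exists B : 'M[L]_(r, n), (B == cokermx D)%MS.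
  by apply: exists_eqmx_rank; rewrite mxrank_coker; lia.
exists (cokermx D *m pinvmx B).
have coker_kerG : kermx (cokermx D *m pinvmx B) *m cokermx D = 0.
  rewrite -[LHS](mulmxKpV (A := _ *m cokermx D) (B := B)).
    by rewrite -(mulmxA (kermx _)) mulmx_ker mul0mx.
  by rewrite (eqmxP eq_B) submxMl.
apply/andP; split; first by rewrite submxE coker_kerG.
by rewrite sub_kermx mulmxA mulmx_coker mul0mx.
Qed.

Lemma row_free_det (L : fieldType) r (A : 'M[L]_r) : row_free A = (\det A != 0).
Proof. by rewrite row_free_unit unitmxE unitfE. Qed.

Lemma capmxIIl (L : fieldType) n m1 m2 m3
    (A : 'M[L]_(m1, n)) (B : 'M[L]_(m2, n)) (C : 'M[L]_(m3, n)) :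
  (A :&: B :&: C :=: (A :&: C) :&: (B :&: C))%MS.
Proof.
apply/eqmxP/andP; split.
  by rewrite sub_capmx !capmxS ?capmxSl ?capmxSr.
have capCl X Y : ((X :&: C) :&: Y <= X)%MS.
  exact: submx_trans (capmxSl _ _) (capmxSl _ _).
by rewrite !sub_capmx capCl capmxC capCl (submx_trans (capmxSl _ _) (capmxSr _ _)).
Qed.

Section SkewPairs.
Variable L : fieldType.
Hypothesis L_infinite : forall xs : seq L, exists x, x \notin xs.

Lemma skew_pairs_bound n a b m (U W : 'I_m -> 'M[L]_n) :
  (forall i, \rank (U i) = a) -> (forall i, \rank (W i) = b) ->
  (forall i, \rank (U i :&: W i)%MS = 0%N) ->
  (forall i j, i != j -> 0 < \rank (U i :&: W j)%MS)%N ->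
  (m <= 'C(a + b, a))%N.
Proof.
move=> rank_U rank_W skew_UW meet_UW; have [-> // | m_gt0] := posnP m.
have rank_UW i j : (\rank (U i + W j)%MS + \rank (U i :&: W j)%MS = a + b)%N.
  by rewrite mxrank_sum_cap rank_U rank_W.
have [D [rank_D rank_UWD]] :=
  exists_generic_capmx L_infinite (a + b) [seq (U i + W i)%MS | i <- enum 'I_m].
have [G kerG] : exists G : 'M[L]_(n, a + b), (kermx G == D)%MS.
  pose i0 := Ordinal m_gt0; apply: exists_mx_kermx.
  rewrite rank_D subnK // -(rank_UW i0 i0).
  by rewrite skew_UW addn0 rank_leq_col.
have [BU eq_BU] := fin_all_exists (fun i => exists_eqmx_rank (rank_U i)).
have [BW eq_BW] := fin_all_exists (fun i => exists_eqmx_rank (rank_W i)).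
have rank_proj i j : (\rank (col_mx (BU i *m G) (BW j *m G))
    + \rank ((U i + W j) :&: D)%MS = \rank (U i + W j)%MS)%N.
  have eq_UW : (col_mx (BU i) (BW j) :=: U i + W j)%MS.
    apply: eqmx_trans (eqmx_sym (addsmxE _ _)) _.
    exact: adds_eqmx (elimT eqmxP (eq_BU i)) (elimT eqmxP (eq_BW j)).
  rewrite -mul_col_mx -eq_UW -[RHS](mxrank_mul_ker _ G); congr (_ + _)%N.
  apply: eqmx_rank.
  exact/eqmxP/(cap_eqmx (eqmx_sym eq_UW) (eqmx_sym (elimT eqmxP kerG))).
pose M := \matrix_(i, j) \det (col_mx (BU i *m G) (BW j *m G)).
have M_diag : M = diag_mx (\row_i M i i).
  apply/matrixP => i j; rewrite !mxE; have [-> // | neq_ij] := eqVneq i j.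
  apply/eqP; rewrite mulr0n; apply/negPn; rewrite -row_free_det /row_free.
  by have := rank_proj i j; have := rank_UW i j; have := meet_UW i j neq_ij; lia.
suff <- : \rank M = m by apply: mxrank_det_col_mx_le.
rewrite M_diag mxrank_unit // unitmxE det_diag unitfE; apply/prodf_neq0 => i _.
rewrite !mxE -row_free_det /row_free; have := rank_proj i i; have := rank_UW i i.
by rewrite rank_UWD ?map_f ?mem_enum // skew_UW; lia.
Qed.

Lemma skew_t_intersecting_bound n k t m (K : 'I_m -> 'M[L]_n) (sg : 'I_m -> 'I_m) :
  (0 < t)%N -> injective sg -> (forall i, \rank (K i) = k) ->
  (forall i, \rank (K i :&: K (sg i))%MS < t)%N ->
  (forall i j, j != sg i -> t <= \rank (K i :&: K j)%MS)%N ->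
  (m <= 'C(k.+1 - t + (k.+1 - t), k.+1 - t))%N.
Proof.
move=> t_gt0 sg_inj rank_K small_sg large_other.
have [H [_ rank_KH]] := exists_generic_capmx L_infinite t.-1
  [seq (K i :&: K j)%MS | i <- enum 'I_m, j <- enum 'I_m].
pose Z i := (K i :&: H)%MS.
have rank_ZZ i j : \rank (Z i :&: Z j)%MS = (\rank (K i :&: K j)%MS - t.-1)%N.
  by rewrite -capmxIIl rank_KH // allpairs_f ?mem_enum.
have rank_Z i : \rank (Z i) = (k.+1 - t)%N.
  rewrite -(capmx_idPl (submx_refl (Z i))) rank_ZZ.
  by rewrite (capmx_idPl (submx_refl _)) rank_K; lia.
apply: (skew_pairs_bound (U := Z) (W := Z \o sg)) => // [i | i | i j neq_ij] /=.
- exact: rank_Z.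
- by rewrite rank_ZZ; have := small_sg i; lia.
- have neq_sg : sg j != sg i by rewrite (inj_eq sg_inj) eq_sym.
  by rewrite rank_ZZ; have := large_other i _ neq_sg; lia.
Qed.
End SkewPairs.

Import VectorInternalTheory.

Lemma mxrank_map_capv (F L : fieldType) (vT : vectType F) (f : {rmorphism F -> L})
    (U V : {vspace vT}) :
  \rank (map_mx f (vs2mx U) :&: map_mx f (vs2mx V))%MS = \dim (U :&: V).
Proof.
rewrite -map_capmx mxrank_map; apply/eqmx_rank/eqmxP/eqmx_sym.
exact: mx2vsK.
Qed.

Lemma exists_notin_of_inj_nat (T : eqType) (g : nat -> T) :
  injective g -> forall xs : seq T, exists x, x \notin xs.
Proof.
move=> g_inj xs; pose gs := map g (iota 0 (size xs).+1).
have [all_in | /allPn[x _ x_notin]] := boolP (all (mem xs) gs); last by exists x.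
have gs_uniq : uniq gs by rewrite map_inj_uniq // iota_uniq.
by have := uniq_leq_size gs_uniq (allP all_in); rewrite size_map size_iota ltnn.
Qed.

Lemma fracpoly_infinite (F : fieldType) (xs : seq {fraction {poly F}}) :
  exists x, x \notin xs.
Proof.
apply: (@exists_notin_of_inj_nat _ (fun i => tofrac 'X^i)) => i j /eqP.
rewrite tofrac_eq => /eqP/(congr1 (size : {poly F} -> nat)).
by rewrite !size_polyXn => -[].
Qed.

Section Partners.
Variables (F : fieldType) (vT : vectType F) (t k : nat) (fam : seq {vspace vT}).
Hypotheses (fam_uniq : uniq fam) (dim_fam : forall A, A \in fam -> \dim A = k).
Hypotheses (fam_almost : almost_t_intersecting t fam) (fam_tau : tau_ge t fam k.+1).

Let A (i : 'I_(size fam)) := nth 0%VS fam i.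

Lemma small_cap_unique i j1 j2 :
  (\dim (A i :&: A j1) < t)%N -> (\dim (A i :&: A j2) < t)%N -> j1 = j2.
Proof.
move=> small_j1 small_j2; apply/eqP; apply: contraT => neq_j.
have := fam_almost (mem_nth 0%VS (ltn_ord i)); rewrite -size_filter.
suff two_small : (2 <= size [seq B <- fam | \dim (A i :&: B) < t])%N.
  by move/(leq_trans two_small).
apply: (uniq_leq_size (s1 := [:: A j1; A j2])) => [|B].
  by rewrite /= mem_seq1 andbT nth_uniq ?ltn_ord.
rewrite mem_seq2 mem_filter => /orP[/eqP-> | /eqP->].
  by rewrite small_j1 (mem_nth _ (ltn_ord j1)).
by rewrite small_j2 (mem_nth _ (ltn_ord j2)).
Qed.

Lemma exists_small_cap i : exists j, (\dim (A i :&: A j) < t)%N.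
Proof.
suff /existsP[j small_j] : [exists j, \dim (A i :&: A j) < t]%N by exists j.
apply: contraT => /existsPn no_small.
have cover : is_t_cover t fam (A i).
  by move=> B /(nthP 0%VS)[j lt_j <-]; have := no_small (Ordinal lt_j); rewrite -leqNgt.
by have := fam_tau cover; rewrite dim_fam ?mem_nth // ltnn.
Qed.

Lemma exists_partner : exists sg : 'I_(size fam) -> 'I_(size fam),
  [/\ injective sg, forall i, (\dim (A i :&: A (sg i)) < t)%N
    & forall i j, j != sg i -> (t <= \dim (A i :&: A j))%N].
Proof.
have [sg small_sg] := fin_all_exists exists_small_cap.
exists sg; split=> // [i1 i2 eq_sg | i j].
  apply: (small_cap_unique (i := sg i1)); rewrite capvC; first exact: small_sg.
  by rewrite eq_sg; apply: small_sg.
move=> neq_j; rewrite leqNgt; apply: contra neq_j => small_j.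
by rewrite (small_cap_unique small_j (small_sg i)).
Qed.
End Partners.

Theorem lemma3p1 (F : finFieldType) (vT : vectType F) (n k t : nat)
  (fam : seq {vspace vT}) :
  (0 < n)%N -> (0 < k)%N -> (0 < t)%N -> (t.+1 <= k)%N -> (2 * k <= n)%N ->
  \dim (fullv : {vspace vT}) = n ->
  uniq fam ->
  (forall A, A \in fam -> \dim A = k) ->
  almost_t_intersecting t fam ->
  tau_ge t fam k.+1 ->
  (size fam <= 'C(2 * k - 2 * t + 2, k - t + 1))%N.
Proof.
move=> _ _ t_gt0 lt_t_k _ _ fam_uniq dim_fam fam_almost fam_tau.
have [sg [sg_inj small_sg large_other]] :=
  exists_partner fam_uniq dim_fam fam_almost fam_tau.
pose f : {rmorphism F -> {fraction {poly F}}} := @tofrac _ \o polyC.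
pose K i := map_mx f (vs2mx (nth 0%VS fam i)).
have -> : (2 * k - 2 * t + 2 = k.+1 - t + (k.+1 - t))%N by lia.
have -> : (k - t + 1 = k.+1 - t)%N by lia.
apply: (skew_t_intersecting_bound (@fracpoly_infinite F) (K := K) t_gt0 sg_inj).
- by move=> i; rewrite mxrank_map; apply: dim_fam; rewrite mem_nth.
- by move=> i; rewrite mxrank_map_capv.
- by move=> i j /large_other; rewrite mxrank_map_capv.
Qed.
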